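(* Let $\Gamma$ be a group, $\alpha\in\mathrm{Aut}(\Gamma)$ and $a\in K(\alpha)$. Then the set $\{x\in\mathbb Q_2: a(x)\neq e_\Gamma\}$ is dense in $\mathrm{supp}(a)$.
   Context: $\{0,1\}^*$ denotes the finite words over $\{0,1\}$ (including the empty word), $|u|$ the length; $\mathfrak C=\{0,1\}^{\mathbb N}$ with the product topology; $\mathbb Q_2\subset\mathfrak C$ the eventually-zero sequences $u00\cdots$. $K(\alpha)$ is the group of maps $a:\{0,1\}^*\to\Gamma$ with $a(u)=\alpha(a(u0))$ for all $u$. For $x\in\mathbb Q_2$ one sets $a(x):=\alpha^{|u|}(a(u))$ where $x=u00\cdots$ (independent of the choice of $u$). The support is $\mathrm{supp}(a):=\{x=x_0x_1\cdots\in\mathfrak C:\ \text{for every } m\ge0 \text{ the map } w\mapsto a(x_0\cdots x_mw),\ w\in\{0,1\}^*, \text{ is not identically } e_\Gamma\}$. *)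

From HB Require Import structures.
From mathcomp Require Import all_boot all_order all_algebra.
From mathcomp Require Import all_classical all_reals all_analysis.
From mathcomp Require Import monoid.
Set Implicit Arguments. Unset Strict Implicit. Unset Printing Implicit Defensive.
Local Open Scope classical_set_scope.
Local Open Scope group_scope.

(* Finite words over {0,1} are [seq bool], with 0 = false, 1 = true.
   The Cantor space C = {0,1}^N is [cantor_space] (product topology). *)

Definition is_automorphism (G : groupType) (alpha : G -> G) : Prop :=
  monoid_morphism alpha /\ bijective alpha.

Definition in_K (G : groupType) (alpha : G -> G) (a : seq bool -> G) : Prop :=
  forall u : seq bool, a u = alpha (a (rcons u false)).

Definition word_to_seq (u : seq bool) : cantor_space := fun n => nth false u n.

Definition Q2 : set cantor_space := [set x | exists u, x = word_to_seq u].

(* a(x) = alpha^{|u|}(a u) for x = u00... (a relation; independent of u). *)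
Definition a_at (G : groupType) (alpha : G -> G) (a : seq bool -> G)
  (x : cantor_space) (g : G) : Prop :=
  exists u, x = word_to_seq u /\ g = iter (size u) alpha (a u).

Definition nontrivial_points (G : groupType) (alpha : G -> G) (a : seq bool -> G)
  : set cantor_space :=
  [set x | Q2 x /\ exists g, a_at alpha a x g /\ g <> 1].

Definition supp (G : groupType) (a : seq bool -> G) : set cantor_space :=
  [set x | forall m : nat, exists w : seq bool, a (mkseq x m.+1 ++ w) <> 1].

From HB Require Import structures.
From mathcomp Require Import all_boot all_order all_algebra.
From mathcomp Require Import all_classical all_reals all_analysis.
From mathcomp Require Import monoid.
Local Open Scope classical_set_scope.

(* Since a(u) = alpha^k(a(u 0^k)) and alpha is injective, a(u) <> e forces
   a(u 0^k) <> e for every k; hence a nontrivial point u00... has, above every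
   prefix, a word on which a is nontrivial, i.e. it lies in supp(a).
   Conversely, if x is in supp(a), pick for each m a word w_m with
   a(x_0 ... x_m w_m) <> e; the points (x_0 ... x_m w_m)00... are nontrivial
   (again by injectivity of alpha) and converge to x in the product topology. *)

Lemma cvg_prefix (T : topologicalType) (x : prod_topology (fun _ : nat => T))
    (g : nat -> prod_topology (fun _ : nat => T)) :
  (forall N i, (i <= N)%N -> g N i = x i) -> g @ \oo --> x.
Proof.
move=> gx; apply/cvg_sup => i U [V] [[W] oW <-] Wxi WU.
apply: (filterS WU); rewrite nbhs_simpl; exists i => // N /= iN.
by rewrite /= gx.
Qed.

Lemma word_to_seq_prefix (x : cantor_space) n w i :
  (i <= n)%N -> word_to_seq (mkseq x n.+1 ++ w) i = x i.
Proof. by move=> ni; rewrite /word_to_seq nth_cat size_mkseq ltnS ni nth_mkseq. Qed.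

Lemma mkseq_word_to_seq u n :
  mkseq (word_to_seq u) n = take n (u ++ nseq n false).
Proof.
apply: (@eq_from_nth _ false).
  by rewrite size_mkseq size_takel // size_cat size_nseq leq_addl.
move=> i; rewrite size_mkseq => ni.
rewrite nth_mkseq // nth_take // /word_to_seq nth_cat.
by case: ltnP => // ui; rewrite nth_nseq nth_default //; case: ifP.
Qed.

Section InK.
Local Open Scope group_scope.
Variables (G : groupType) (alpha : G -> G) (a : seq bool -> G).
Hypotheses (alpha1 : alpha 1 = 1) (alpha_inj : injective alpha).
Hypothesis ha : in_K alpha a.

Lemma iter_eq1 n g : (iter n alpha g == 1) = (g == 1).
Proof.
elim: n => //= n <-.
by rewrite -[X in _ == X]alpha1 (inj_eq alpha_inj).
Qed.

Lemma in_K_iter u k : a u = iter k alpha (a (u ++ nseq k false)).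
Proof.
elim: k u => [|k IH] u; first by rewrite cats0.
by rewrite ha (IH (rcons u false)) iterS -cats1 -catA.
Qed.

Lemma in_K_cat_nseq_eq1 u k : (a (u ++ nseq k false) == 1) = (a u == 1).
Proof. by rewrite (in_K_iter u k) iter_eq1. Qed.

Lemma nontrivial_pointsP x :
  nontrivial_points alpha a x <-> exists2 u, x = word_to_seq u & a u != 1.
Proof.
split.
  move=> [_ [_ [[u [-> ->]] /eqP]]]; rewrite iter_eq1 => au.
  by exists u.
move=> [u -> au]; split; first by exists u.
exists (iter (size u) alpha (a u)); split; first by exists u.
by apply/eqP; rewrite iter_eq1.
Qed.

Lemma nontrivial_points_sub_supp : nontrivial_points alpha a `<=` supp a.
Proof.
move=> _ /nontrivial_pointsP [u -> au] m.
exists (drop m.+1 (u ++ nseq m.+1 false)).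
by rewrite mkseq_word_to_seq cat_take_drop; apply/eqP; rewrite in_K_cat_nseq_eq1.
Qed.

Lemma supp_sub_closure_nontrivial_points :
  supp a `<=` closure (nontrivial_points alpha a).
Proof.
move=> x xs.
have [w wP] := choice xs.
pose approx N : cantor_space := word_to_seq (mkseq x N.+1 ++ w N).
have approx_cvg : approx @ \oo --> x.
  by apply: cvg_prefix => N i; apply: word_to_seq_prefix.
move=> B /approx_cvg [N _ approxB]; exists (approx N); split.
  apply/nontrivial_pointsP; exists (mkseq x N.+1 ++ w N) => //.
  exact/eqP/wP.
by apply: approxB => /=.
Qed.

End InK.

Theorem mainTheorem10 (G : groupType) (alpha : G -> G) (a : seq bool -> G)
  (halpha : is_automorphism alpha) (ha : in_K alpha a) :
  nontrivial_points alpha a `<=` supp a /\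
  supp a `<=` closure (nontrivial_points alpha a).
Proof.
have [[alpha1 _] [beta alphaK _]] := halpha.
have alpha_inj : injective alpha := can_inj alphaK.
split.
- exact: nontrivial_points_sub_supp.
- exact: supp_sub_closure_nontrivial_points.
Qed.
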